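(* Let $\alpha,\beta,\gamma,x$ be real numbers, $\lambda$ a nonnegative integer and $n$ a nonnegative integer. Then $$xA_{n}^{\lambda+1,x}(\alpha,\beta,\gamma+\beta)=(x+1)A_{n}^{\lambda+1,x}(\alpha,\beta,\gamma)-A_{n}^{\lambda,x}(\alpha,\beta,\gamma)$$ and $$A_{n+1}^{\lambda,x}(\alpha,\beta,\gamma-\alpha)-(x+1)\lambda\beta\, A_{n}^{\lambda+1,x}(\alpha,\beta,\gamma)=(\gamma-\alpha-\lambda\beta)A_{n}^{\lambda,x}(\alpha,\beta,\gamma).$$
   Context: For a number $t$ and $\alpha$, the generalised factorial is $(t|\alpha)_n=\prod_{j=0}^{n-1}(t-j\alpha)$ for $n\ge 1$ and $(t|\alpha)_0=1$. For parameters $\alpha,\beta,\gamma$, the generalised Stirling numbers $S(n,k,\alpha,\beta,\gamma)$ ($0\le k\le n$) are defined by the polynomial identity $(t|\alpha)_n=\sum_{k=0}^{n}S(n,k,\alpha,\beta,\gamma)\,(t-\gamma|\beta)_k$ in the variable $t$. For a nonnegative integer $\lambda$ put $\binom{k+\lambda-1}{k}=\lambda(\lambda+1)\cdots(\lambda+k-1)/k!$ (equal to $1$ for $k=0$). Define $$A^{\lambda,x}_n(\alpha,\beta,\gamma)=\sum_{k=0}^{n}\binom{k+\lambda-1}{k}(-1)^{n+k}\beta^k k!\,S(n,k,\alpha,-\beta,-\gamma)\,x^k .$$ (For $\alpha\neq0$ these have exponential generating function $\sum_n A^{\lambda,x}_n(\alpha,\beta,\gamma)t^n/n!=(1-\alpha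 t)^{-\gamma/\alpha}\big(1-x[(1-\alpha t)^{-\beta/\alpha}-1]\big)^{-\lambda}$.) *)

From HB Require Import structures.
From mathcomp Require Import all_boot all_order all_algebra.
From mathcomp Require Import reals.
From Stdlib Require Import ClassicalEpsilon.
Set Implicit Arguments. Unset Strict Implicit. Unset Printing Implicit Defensive.
Import Order.TTheory GRing.Theory Num.Theory.
Local Open Scope ring_scope.

(* (t - c | a)_n as a polynomial in t : prod_{j<n} (t - c - j a). *)
Definition gfact_poly (R : realType) (c a : R) (n : nat) : {poly R} :=
  \prod_(j < n) ('X - (c + j%:R * a)%:P).

Definition stirling_spec (R : realType) (n : nat) (alpha beta gamma : R)
  (s : nat -> R) : Prop :=
  gfact_poly 0 alpha n = \sum_(k < n.+1) s k *: gfact_poly gamma beta k.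

(* Generalised Stirling numbers S(n,k,alpha,beta,gamma), 0 <= k <= n, defined
   as the (unique) coefficients of the expansion above. *)
Definition gstirling (R : realType) (n k : nat) (alpha beta gamma : R) : R :=
  epsilon (inhabits (fun _ : nat => (0 : R))) (stirling_spec n alpha beta gamma) k.

(* binom(k+lambda-1, k) = lambda (lambda+1) ... (lambda+k-1) / k! *)
Definition rbinom (R : realType) (lam k : nat) : R :=
  (\prod_(i < k) (lam + i)%:R) / (k`!)%:R.

Definition Apoly (R : realType) (n lam : nat) (x alpha beta gamma : R) : R :=
  \sum_(k < n.+1) rbinom R lam k * (-1) ^+ (n + k) * beta ^+ k * (k`!)%:R
     * gstirling n k alpha (- beta) (- gamma) * x ^+ k.

From mathcomp Require Import all_boot all_order all_algebra.
From mathcomp Require Import reals ring.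
From Stdlib Require Import ClassicalEpsilon.
Set Implicit Arguments. Unset Strict Implicit. Unset Printing Implicit Defensive.
Import GRing.Theory Num.Theory.
Local Open Scope ring_scope.

(* The polynomials (t - c | a)_k, k = 0, 1, ..., are monic of degree k, so the
   expansion of (t | alpha)_n in them is unique.  Rewriting the basis gives two
   recurrences for the coefficients S(n, k): moving the base point c to c + a uses
   (t - c | a)_(k+1) = (t - c - a | a)_(k+1) + (k+1) a (t - c - a | a)_k, and passing
   from n to n + 1 uses (t | alpha)_(n+1) = t (t - alpha | alpha)_n together with
   t (t - c | a)_k = (t - c | a)_(k+1) + (c + k a) (t - c | a)_k.  In A, the k-th
   coefficient carries the rising factorial lambda^(k) = lambda (lambda+1) ... (lambda+k-1),
   and after an index shift both identities reduce termwise to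
   lambda^(k+1) = lambda (lambda+1)^(k) = lambda^(k) (lambda + k). *)

Section DegreeBasis.
Variable R : nzRingType.
Variable P : nat -> {poly R}.
Hypothesis P_monic : forall k, P k \is monic.
Hypothesis size_P : forall k, size (P k) = k.+1.

Lemma coef_degree_basis_lead k : (P k)`_k = 1.
Proof. by have /monicP := P_monic k; rewrite /lead_coef size_P. Qed.

Lemma coef_degree_basis_gt k j : (k < j)%N -> (P k)`_j = 0.
Proof. by move=> ltkj; apply: nth_default; rewrite size_P. Qed.

Lemma degree_basis_spans N (p : {poly R}) : (size p <= N)%N ->
  exists s : nat -> R, p = \sum_(k < N) s k *: P k.
Proof.
elim: N p => [|N IHN] p szp.
  by exists (fun _ => 0); rewrite big_ord0; apply/size_poly_leq0P.
have szq : (size (p - p`_N *: P N)%R <= N)%N.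
  apply/leq_sizeP => j leNj; rewrite coefB coefZ.
  case: (ltngtP j N) => [|ltNj|->]; first by rewrite ltnNge leNj.
    by rewrite coef_degree_basis_gt // mulr0 subr0; apply: (leq_sizeP _ _ szp).
  by rewrite coef_degree_basis_lead mulr1 subrr.
have [s qs] := IHN _ szq; exists (fun k => if k == N then p`_N else s k).
rewrite big_ord_recr /= eqxx -{1}[p](subrK (p`_N *: P N)) qs; congr (_ + _).
by apply: eq_bigr => i _; rewrite ltn_eqF.
Qed.

Lemma degree_basis_free N (s : nat -> R) :
  \sum_(k < N) s k *: P k = 0 -> forall k, (k < N)%N -> s k = 0.
Proof.
elim: N => [//|N IHN]; rewrite big_ord_recr /= => sum0.
have sN0 : s N = 0.
  have /(congr1 (coefp N)) := sum0.
  rewrite /= coefD coef_sum coef0 coefZ coef_degree_basis_lead mulr1 => <-.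
  by rewrite big1 ?add0r // => i _; rewrite coefZ coef_degree_basis_gt ?mulr0.
move: sum0; rewrite sN0 scale0r addr0 => /IHN s0 k.
by rewrite ltnS leq_eqVlt => /predU1P[->|/s0].
Qed.

End DegreeBasis.

Section GeneralisedFactorial.
Variable R : realType.
Implicit Types a b c : R.
Local Notation G := (@gfact_poly R).

Lemma size_gfact_poly c a k : size (G c a k) = k.+1.
Proof. by rewrite size_prod_XsubC /index_enum unlock -enumT size_enum_ord. Qed.

Lemma gfact_poly_monic c a k : G c a k \is monic.
Proof. exact: monic_prod_XsubC. Qed.

Lemma gfact_poly0 c a : G c a 0 = 1.
Proof. by rewrite /gfact_poly big_ord0. Qed.

Lemma gfact_polyS c a k : G c a k.+1 = G c a k * ('X - (c + k%:R * a)%:P).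
Proof. by rewrite /gfact_poly big_ord_recr. Qed.

Lemma gfact_polySl c a k : G c a k.+1 = ('X - c%:P) * G (c + a) a k.
Proof.
rewrite /gfact_poly big_ord_recl mul0r addr0; congr (_ * _).
by apply: eq_bigr => i _; rewrite lift0 -addn1 natrD; congr ('X - _%:P); ring.
Qed.

Lemma gfact_poly_comp c a b k : G c a k \Po ('X - b%:P) = G (c + b) a k.
Proof.
elim: k => [|k IHk]; first by rewrite !gfact_poly0 comp_polyC.
rewrite !gfact_polyS comp_polyM IHk comp_polyB comp_polyX comp_polyC.
by rewrite -addrA -opprD -polyCD; congr (_ * ('X - _%:P)); ring.
Qed.

Lemma mulX_gfact_poly c a k : 'X * G c a k = G c a k.+1 + (c + k%:R * a) *: G c a k.
Proof. by rewrite gfact_polyS -mul_polyC; ring. Qed.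

Lemma gfact_poly_shift_base c a k :
  G c a k.+1 = G (c + a) a k.+1 + (k.+1%:R * a) *: G (c + a) a k.
Proof.
rewrite gfact_polySl [G (c + a) a k.+1]gfact_polyS -mul_polyC.
have -> : c%:P = (c + a + k%:R * a)%:P - (k.+1%:R * a)%:P.
  by rewrite -polyCB -addn1 natrD; congr _%:P; ring.
ring.
Qed.

End GeneralisedFactorial.

Section Stirling.
Variable R : realType.
Implicit Types al a c : R.
Local Notation G := (@gfact_poly R).

(* [gstirling n k] extended by zero to all [k], so that sums may run past [n]. *)
Definition stirling al a c n k : R := if (k <= n)%N then gstirling n k al a c else 0.

Lemma stirling_gt al a c n k : (n < k)%N -> stirling al a c n k = 0.
Proof. by rewrite /stirling ltnNge => /negbTE->. Qed.

Lemma gstirling_spec al a c n : stirling_spec n al a c (fun k => gstirling n k al a c).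
Proof.
exact: epsilon_spec (degree_basis_spans (gfact_poly_monic c a) (size_gfact_poly c a)
  (eq_leq (size_gfact_poly 0 al n))).
Qed.

Lemma gfact_poly_stirling al a c n N : (n < N)%N ->
  G 0 al n = \sum_(k < N) stirling al a c n k *: G c a k.
Proof.
move=> ltnN; rewrite (gstirling_spec al a c).
rewrite (big_ord_widen _ (fun k => gstirling n k al a c *: G c a k) ltnN) big_mkcond /=; apply: eq_bigr => k _.
by rewrite /stirling ltnS; case: ifP; rewrite ?scale0r.
Qed.

Lemma stirling_unique al a c n N (s : nat -> R) : (n < N)%N ->
  G 0 al n = \sum_(k < N) s k *: G c a k ->
  forall k, (k < N)%N -> s k = stirling al a c n k.
Proof.
move=> ltnN Gs k ltkN; apply/eqP; rewrite -subr_eq0; apply/eqP; move: k ltkN.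
apply: (degree_basis_free (gfact_poly_monic c a) (size_gfact_poly c a)).
under eq_bigr do rewrite scalerBl.
by rewrite sumrB -Gs -gfact_poly_stirling ?subrr.
Qed.

Lemma stirling_shift_base al a c n k :
  stirling al a (c + a) n k = stirling al a c n k + stirling al a c n k.+1 * (k.+1%:R * a).
Proof.
set s := stirling al a c n; set N := (k + n.+1)%N.
have ltnN : (n < N)%N by rewrite ltn_addl.
symmetry; apply: (@stirling_unique al a (c + a) n N
  (fun j => s j + s j.+1 * (j.+1%:R * a))) => //; last by rewrite /N -addSnnS leq_addr.
have sumN : \sum_(j < N) s j *: G (c + a) a j = \sum_(j < N.+1) s j *: G (c + a) a j.
  by rewrite big_ord_recr /= [s N]stirling_gt // scale0r addr0.
under eq_bigr do rewrite scalerDl.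
rewrite big_split /= sumN (@gfact_poly_stirling al a c n N.+1); last by rewrite ltnS ltnW.
rewrite -/s !big_ord_recl !gfact_poly0 -addrA; congr (_ + _).
rewrite -big_split; apply: eq_bigr => i _.
by rewrite lift0 gfact_poly_shift_base scalerDr scalerA.
Qed.

Lemma stirling_succ al a c n k :
  stirling al a (c + al) n.+1 k
    = (if k is k'.+1 then stirling al a c n k' else 0)
      + stirling al a c n k * (c + al + k%:R * a).
Proof.
set s := stirling al a c n; set M := (k + n.+1)%N.
have ltnM : (n < M)%N by rewrite ltn_addl.
symmetry; apply: (@stirling_unique al a (c + al) n.+1 M.+1
  (fun j => (if j is j'.+1 then s j' else 0) + s j * (c + al + j%:R * a))) => //;
  last by rewrite ltnS leq_addr.
under eq_bigr do rewrite scalerDl.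
rewrite big_split /= [X in _ + X]big_ord_recr /= [s M]stirling_gt // mul0r scale0r addr0.
rewrite big_ord_recl scale0r add0r gfact_polySl polyC0 subr0 -(gfact_poly_comp 0 al al).
rewrite (@gfact_poly_stirling al a c n M) // raddf_sum mulr_sumr -big_split.
apply: eq_bigr => j _.
by rewrite lift0 /= comp_polyZ gfact_poly_comp -scalerAr mulX_gfact_poly scalerDr scalerA.
Qed.

End Stirling.

Definition rising (m k : nat) : nat := \prod_(i < k) (m + i).

Lemma rising0 m : rising m 0 = 1%N.
Proof. by rewrite /rising big_ord0. Qed.

Lemma risingS m k : rising m k.+1 = (rising m k * (m + k))%N.
Proof. by rewrite /rising big_ord_recr. Qed.

Lemma risingSl m k : rising m k.+1 = (m * rising m.+1 k)%N.
Proof.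
rewrite /rising big_ord_recl addn0; congr (_ * _)%N.
by apply: eq_bigr => i _; rewrite lift0 addSnnS.
Qed.

Lemma risingSS m k : rising m.+1 k.+1 = (rising m k.+1 + k.+1 * rising m.+1 k)%N.
Proof. by rewrite risingS [rising m k.+1]risingSl -mulnDl addSnnS mulnC. Qed.

Lemma rbinom_fact (R : realType) m k : rbinom R m k * (k`!)%:R = (rising m k)%:R.
Proof. by rewrite /rbinom divfK ?pnatr_eq0 -?lt0n ?fact_gt0 // natr_prod. Qed.

Lemma sum_ord_shift (V : nmodType) N (g : nat -> V) :
  g 0%N = 0 -> g N = 0 -> \sum_(k < N) g k.+1 = \sum_(k < N) g k.
Proof.
case: N => [|N] g0 gN; first by rewrite !big_ord0.
rewrite big_ord_recr /= gN addr0 big_ord_recl g0 add0r.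
by apply: eq_bigr => i _; rewrite lift0.
Qed.

Section RisingSeries.
Variable R : comPzRingType.

Definition rising_series m (p : R) (s : nat -> R) N : R :=
  \sum_(k < N) (rising m k)%:R * p ^+ k * s k.

Lemma rising_series_shift_base m (a x : R) (s t : nat -> R) N :
  (forall k, t k = s k + s k.+1 * (k.+1%:R * a)) -> s N = 0 ->
  x * rising_series m.+1 (a * x) t N
    = (x + 1) * rising_series m.+1 (a * x) s N - rising_series m (a * x) s N.
Proof.
move=> dt sN0; set p := a * x.
pose g k := (k * rising m.+1 k.-1)%:R * p ^+ k * s k.
have diff : rising_series m.+1 p s N - rising_series m p s N = \sum_(k < N) g k.
  rewrite -sumrB; apply: eq_bigr => -[[|k] ?] _; rewrite /g /=.
    by rewrite !rising0 subrr !mul0r.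
  by rewrite risingSS natrD; ring.
have shifted : x * \sum_(k < N) (rising m.+1 k)%:R * p ^+ k * (s k.+1 * (k.+1%:R * a))
    = \sum_(k < N) g k.+1.
  by rewrite mulr_sumr; apply: eq_bigr => k _; rewrite /g /= natrM exprS /p; ring.
rewrite mulrDl mul1r -addrA diff -(sum_ord_shift (g := g)) ?/g ?sN0 ?mulr0 ?mul0r //.
rewrite -shifted -mulrDr -big_split; congr (x * _).
by apply: eq_bigr => k _; rewrite dt mulrDr.
Qed.

Lemma rising_series_succ m (a x c : R) (s t : nat -> R) N :
  (forall k, t k = (if k is k'.+1 then s k' else 0) + s k * (c + k%:R * a)) -> s N = 0 ->
  rising_series m (a * x) t N.+1
    = m%:R * a * (x + 1) * rising_series m.+1 (a * x) s N
      + (c - m%:R * a) * rising_series m (a * x) s N.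
Proof.
move=> dt sN0; set p := a * x; rewrite /rising_series.
under eq_bigr do rewrite dt mulrDr.
rewrite big_split /= [X in _ + X]big_ord_recr /= sN0 mul0r mulr0 addr0.
rewrite big_ord_recl mulr0 add0r !mulr_sumr -!big_split; apply: eq_bigr => k _.
have risingE : m%:R * (rising m.+1 k)%:R = (rising m k)%:R * (m%:R + k%:R) :> R.
  by rewrite -natrD -!natrM -risingSl risingS.
rewrite lift0 risingSl natrM; apply/eqP; rewrite -subr_eq0; apply/eqP.
transitivity (a * p ^+ k * s k * ((rising m k)%:R * (m%:R + k%:R) - m%:R * (rising m.+1 k)%:R)).
  by rewrite /= /p exprS; ring.
by rewrite risingE subrr mulr0.
Qed.

End RisingSeries.

Lemma Apoly_rising_series (R : realType) n m (x al be ga : R) :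
  Apoly n m x al be ga
    = (-1) ^+ n * rising_series m (- be * x) (stirling al (- be) (- ga) n) n.+1.
Proof.
rewrite /Apoly /rising_series mulr_sumr; apply: eq_bigr => k _.
by rewrite /stirling -ltnS ltn_ord -rbinom_fact exprMn exprD [(- be) ^+ _]exprNn; ring.
Qed.

Theorem theorem8 (R : realType) (alpha beta gamma x : R) (lam n : nat) :
  x * Apoly n lam.+1 x alpha beta (gamma + beta)
    = (x + 1) * Apoly n lam.+1 x alpha beta gamma - Apoly n lam x alpha beta gamma
  /\
  Apoly n.+1 lam x alpha beta (gamma - alpha)
    - (x + 1) * lam%:R * beta * Apoly n lam.+1 x alpha beta gamma
    = (gamma - alpha - lam%:R * beta) * Apoly n lam x alpha beta gamma.
Proof.
have stirling_n1 := stirling_gt alpha (- beta) (- gamma) (ltnSn n).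
rewrite !Apoly_rising_series; split.
- have := rising_series_shift_base lam x (stirling_shift_base alpha (- beta) (- gamma) n) stirling_n1.
  by rewrite opprD mulrCA => ->; ring.
- have := rising_series_succ lam x (stirling_succ alpha (- beta) (- gamma) n) stirling_n1.
  have -> : - (gamma - alpha) = - gamma + alpha by rewrite opprB addrC.
  by move=> ->; rewrite exprS; ring.
Qed.
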